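(* Let $\mathcal{B}$ be a $\sigma$-algebra on a nonempty set $E$. A $\sigma$-maxitive measure on $\mathcal{B}$ is optimal if and only if it is exhaustive.
   Context: A maxitive measure on $\mathcal{B}$ is $\nu:\mathcal{B}\to[0,\infty]$ with $\nu(\emptyset)=0$ and $\nu(B\cup B')=\max(\nu(B),\nu(B'))$; it is $\sigma$-maxitive if moreover $\nu(\bigcup_nB_n)=\lim_n\nu(B_n)$ for every nondecreasing sequence $(B_n)$ in $\mathcal{B}$ (continuity from below). $\nu$ is continuous from above if $\nu(\bigcap_nB_n)=\lim_n\nu(B_n)$ for every nonincreasing sequence $B_1\supset B_2\supset\cdots$ in $\mathcal{B}$ (with no finiteness requirement). An optimal measure is a maxitive measure that is continuous from both above and below. $\nu$ is exhaustive if $\nu(B_n)\to0$ for every sequence $(B_n)$ of pairwise disjoint elements of $\mathcal{B}$. *)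

From HB Require Import structures.
From mathcomp Require Import all_boot all_order all_algebra.
From mathcomp Require Import all_classical all_reals all_analysis.
Set Implicit Arguments. Unset Strict Implicit. Unset Printing Implicit Defensive.
Import Order.TTheory GRing.Theory Num.Theory.
Local Open Scope classical_set_scope.
Local Open Scope ring_scope.
Local Open Scope ereal_scope.

Section MaxitiveDefs.
Context {d : measure_display} {T : measurableType d} {R : realType}.
Implicit Types (nu : set T -> \bar R).

Definition maxitive nu : Prop :=
  [/\ nu set0 = 0,
      (forall A, measurable A -> 0 <= nu A) &
      (forall A B, measurable A -> measurable B ->
         nu (A `|` B) = maxe (nu A) (nu B))].

Definition cont_from_below nu : Prop :=
  forall F : (set T)^nat, (forall n, measurable (F n)) ->
    {homo F : n m / (n <= m)%N >-> n `<=` m} ->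
    nu \o F @ \oo --> nu (\bigcup_n F n).

Definition cont_from_above nu : Prop :=
  forall F : (set T)^nat, (forall n, measurable (F n)) ->
    {homo F : n m / (n <= m)%N >-> m `<=` n} ->
    nu \o F @ \oo --> nu (\bigcap_n F n).

Definition sigma_maxitive nu : Prop := maxitive nu /\ cont_from_below nu.

Definition optimal nu : Prop :=
  [/\ maxitive nu, cont_from_above nu & cont_from_below nu].

Definition exhaustive nu : Prop :=
  forall F : (set T)^nat, (forall n, measurable (F n)) ->
    trivIset setT F -> nu \o F @ \oo --> 0.

End MaxitiveDefs.

From HB Require Import structures.
From mathcomp Require Import all_boot all_order all_algebra.
From mathcomp Require Import all_classical all_reals all_analysis.
Set Implicit Arguments.
Unset Strict Implicit.
Unset Printing Implicit Defensive.
Import Order.TTheory GRing.Theory Num.Theory.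
Local Open Scope classical_set_scope.
Local Open Scope ereal_scope.

(* Optimal => exhaustive: for disjoint F_n the tails \bigcup_(k >= n) F_k
   decrease to the empty set, so continuity from above squeezes nu(F_n) to 0.
   Exhaustive => optimal: it suffices to show continuity from above along
   sequences D_n decreasing to the empty set, because maxitivity gives
   nu(F_n) = max(nu(F_n \ B), nu(B)) with B = \bigcap_n F_n.  If nu(D_n)
   stayed above some e > 0, continuity from below applied to D_n \ D_m (m -> oo)
   would yield indices n_0 < n_1 < ... with nu(D_(n_k) \ D_(n_(k+1))) >= e; these
   sets are pairwise disjoint, contradicting exhaustivity. *)

Lemma ereal_gt0_gt_real (R : realFieldType) (x : \bar R) :
  0 < x -> exists2 e : R, (0 < e)%R & e%:E < x.
Proof.
case: x => [r||] //; last by exists 1%R => //; rewrite ltry.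
rewrite lte_fin => r0; exists (r / 2)%R; first by rewrite divr_gt0.
by rewrite lte_fin ltr_pdivrMr // ltr_pMr // ltr1n.
Qed.

Lemma bigcap_tails_trivIset (T : Type) (F : (set T)^nat) :
  trivIset setT F -> \bigcap_n \bigcup_(k in [set k | (n <= k)%N]) F k = set0.
Proof.
move=> tF; apply/seteqP; split => // x Cx.
have [k _ Fk] := Cx 0%N I; have [j /= kj Fj] := Cx k.+1 I.
have kjE := tF k j I I (ex_intro _ x (conj Fk Fj)).
by move: kj; rewrite kjE ltnn.
Qed.

Lemma trivIset_setD_subseq (T : Type) (D : (set T)^nat) (g : nat -> nat) :
  {homo D : n m / (n <= m)%N >-> m `<=` n} ->
  {homo g : i j / (i < j)%N >-> (i < j)%N} ->
  trivIset setT (fun k => D (g k) `\` D (g k.+1)).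
Proof.
move=> Ddec ginc.
have gle : {homo g : i j / (i <= j)%N >-> (i <= j)%N}.
  by move=> i j; rewrite leq_eqVlt => /predU1P[->|/ginc/ltnW].
have sep i j : (i < j)%N -> D (g j) `<=` D (g i.+1) by move=> ij; exact/Ddec/gle.
move=> i j _ _ [x [[Di nDi1] [Dj nDj1]]].
by have [/sep/(_ x Dj)|/sep/(_ x Di)|] := ltngtP i j.
Qed.

Lemma bigcup_setDr (T : Type) (A : set T) (D : (set T)^nat) :
  \bigcup_m (A `\` D m) = A `\` \bigcap_m D m.
Proof. by rewrite !setDE setC_bigcap setI_bigcupr. Qed.

Section maxitive_measure.
Context {d : measure_display} {T : measurableType d} {R : realType}.
Variable nu : set T -> \bar R.
Hypothesis numax : maxitive nu.

Lemma maxitive_ge0 (A : set T) : measurable A -> 0 <= nu A.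
Proof. by case: numax => _ + _; apply. Qed.

Lemma le_maxitive (A B : set T) :
  measurable A -> measurable B -> A `<=` B -> nu A <= nu B.
Proof.
case: numax => _ _ nuU mA mB AB.
rewrite -(setDUK AB) nuU //; last exact: measurableD.
by rewrite le_max lexx.
Qed.

Lemma maxitive_setDK (A B : set T) :
  measurable A -> measurable B -> A `<=` B -> nu B = maxe (nu (B `\` A)) (nu A).
Proof.
case: numax => _ _ nuU mA mB AB.
by rewrite -nuU ?setDKU //; exact: measurableD.
Qed.

Lemma optimal_exhaustive : optimal nu -> exhaustive nu.
Proof.
move=> [_ nuA _] F mF tF; have [nu0 _ _] := numax.
pose C n := \bigcup_(k in [set k | (n <= k)%N]) F k.
have mC n : measurable (C n) by apply: bigcup_measurable => k _.
have Cdec : {homo C : n m / (n <= m)%N >-> m `<=` n}.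
  by move=> n m nm x [k /= mk Fx]; exists k => //=; exact: leq_trans nm mk.
have := nuA C mC Cdec; rewrite bigcap_tails_trivIset // nu0 => nuC0.
apply: (@squeeze_cvge _ _ _ _ (cst 0) _ (nu \o C)) => //; last exact: cvg_cst.
apply: nearW => n /=; rewrite maxitive_ge0 //=.
by apply: le_maxitive => // x Fx; exists n => /=.
Qed.

Section decreasing_to_empty.
Variable D : (set T)^nat.
Hypothesis mD : forall n, measurable (D n).
Hypothesis Ddec : {homo D : n m / (n <= m)%N >-> m `<=` n}.

Lemma exists_large_setD (e : R) n : cont_from_below nu ->
  \bigcap_m D m = set0 -> e%:E < nu (D n) ->
  exists2 m, (n < m)%N & e%:E <= nu (D n `\` D m).
Proof.
move=> nuB D0 enu.
have Hinc : {homo (fun m => D n `\` D m) : i j / (i <= j)%N >-> i `<=` j}.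
  by move=> i j ij x [Dx nDx]; split => // Djx; apply: nDx; exact: (Ddec ij).
have Hmono : {homo (fun m => nu (D n `\` D m)) : i j / (i <= j)%N >-> i <= j}.
  by move=> i j ij; apply: le_maxitive; [exact: measurableD..|exact: Hinc].
have := nuB _ (fun m => measurableD (mD n) (mD m)) Hinc.
rewrite bigcup_setDr D0 setD0 => nuH.
have := lte_lim Hmono (cvgP _ nuH); rewrite (cvg_lim _ nuH) // => /(_ _ enu) ev.
have [N _ /(_ N (leqnn N)) [nN eN]] :
    \forall m \near \oo, (n < m)%N /\ e%:E <= nu (D n `\` D m).
  by near=> m; split; near: m; [exact: nbhs_infty_gt | exact: ev].
by exists N.
Unshelve. all: by end_near.
Qed.

Lemma exhaustive_no_uniform_gap (e : R) : exhaustive nu -> (0 < e)%R ->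
  ~ (forall n, exists2 m, (n < m)%N & e%:E <= nu (D n `\` D m)).
Proof.
move=> nuE e0 gaps.
have /choice[f fP] : forall n, exists m, (n < m)%N /\ e%:E <= nu (D n `\` D m).
  by move=> n; have [m nm em] := gaps n; exists m.
pose g k := iter k f 0%N.
have ginc : {homo g : i j / (i < j)%N >-> (i < j)%N}.
  by apply: (homo_ltn ltn_trans) => i; exact: (fP (g i)).1.
have nuG := nuE _ (fun k => measurableD (mD _) (mD _)) (trivIset_setD_subseq Ddec ginc).
have : e%:E <= 0.
  rewrite -(cvg_lim _ nuG) //; apply: lime_ge; first exact: cvgP nuG.
  by apply: nearW => k; exact: (fP (g k)).2.
by rewrite lee_fin leNgt e0.
Qed.

Lemma exhaustive_cvg0 : cont_from_below nu -> exhaustive nu ->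
  \bigcap_n D n = set0 -> nu \o D @ \oo --> 0.
Proof.
move=> nuB nuE D0.
have nuDdec : {homo nu \o D : n m / (n <= m)%N >-> m <= n}.
  by move=> n m nm; exact: le_maxitive (Ddec nm).
have := ereal_nonincreasing_cvgn nuDdec; set l := ereal_inf _ => nuDl.
suff <- : l = 0 by [].
have lD n : l <= nu (D n) by apply: ereal_inf_lbound; exists n.
have l0 : 0 <= l by apply: le_ereal_inf_tmp => _ [n _ <-]; exact: maxitive_ge0.
apply/eqP; rewrite eq_le l0 andbT leNgt; apply/negP => /ereal_gt0_gt_real[e e0 el].
apply: (exhaustive_no_uniform_gap nuE e0) => n.
exact: exists_large_setD nuB D0 (lt_le_trans el (lD n)).
Qed.

End decreasing_to_empty.

Lemma exhaustive_cont_from_above :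
  cont_from_below nu -> exhaustive nu -> cont_from_above nu.
Proof.
move=> nuB nuE F mF Fdec.
pose B := \bigcap_n F n.
have mB : measurable B by exact: bigcap_measurable.
have BF n : B `<=` F n by move=> x; exact.
have nuD0 : nu \o (fun n => F n `\` B) @ \oo --> 0.
  apply: exhaustive_cvg0 => //.
  - by move=> n; exact: measurableD.
  - by move=> n m nm x [Fx nBx]; split => //; exact: Fdec nm x Fx.
  - by apply/seteqP; split => // x Dx; apply: (Dx 0%N I).2 => n _; case: (Dx n I).
have nuFdec : {homo nu \o F : n m / (n <= m)%N >-> m <= n}.
  by move=> n m nm; exact: le_maxitive (Fdec _ _ nm).
have := ereal_nonincreasing_cvgn nuFdec; set l := ereal_inf _ => nuFl.
suff -> : nu B = l by [].
have Bl : nu B <= l by apply: le_ereal_inf_tmp => _ [n _ <-]; exact: le_maxitive.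
apply/eqP; rewrite eq_le Bl /= leNgt; apply/negP => Bltl.
have lD n : l <= nu (F n `\` B).
  have : l <= nu (F n) by apply: ereal_inf_lbound; exists n.
  rewrite (maxitive_setDK mB (mF n) (BF n)) le_max => /orP[//|lB].
  by have := lt_le_trans Bltl lB; rewrite ltxx.
have : l <= 0.
  by rewrite -(cvg_lim _ nuD0) //; apply: lime_ge; [exact: cvgP nuD0 | exact: nearW].
by rewrite leNgt (le_lt_trans (maxitive_ge0 mB) Bltl).
Qed.

End maxitive_measure.

Theorem proposition6p4 (d : measure_display) (T : measurableType d)
  (R : realType) (nu : set T -> \bar R) :
  [set: T] !=set0 ->
  sigma_maxitive nu ->
  (optimal nu <-> exhaustive nu).
Proof.
move=> _ [numax nuB]; split; first exact: optimal_exhaustive.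
by move=> nuE; split => //; exact: exhaustive_cont_from_above.
Qed.
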